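(* Let $\Sigma=\{a_1,a_2,c\}$. For $k<m$ in $\mathbb{N}$ let $L_{k,m}$ be the set of trees obtained from $t_c$ by grafting some tree $t'\in L_{\neg a_1\vee\neg a_2}$ on node $l^k r$ and grafting $t_{a_1}$ on node $l^m$; let $L_m:=\bigcup_{k<m}L_{k,m}$ and $L^{fa}:=\bigcup_{m\in\mathbb{N}}L_m$. Then there is a finitely ambiguous parity tree automaton that accepts $L^{fa}$.
   Context: Trees over $\Sigma$ are functions $t:\{l,r\}^*\to\Sigma$; $t_\sigma$ is the tree with all nodes labeled $\sigma$; grafting $t_2$ on node $v$ in $t_1$ replaces the subtree of $t_1$ rooted at $v$ by $t_2$. $L_{\neg a_1\vee\neg a_2}$ is the set of trees over $\Sigma$ with no $a_1$-labeled node or with no $a_2$-labeled node. A parity tree automaton (PTA) $\mathcal{A}=(Q,\Sigma,Q_I,\delta,\mathbb{C})$ ($Q$ finite, $Q_I\subseteq Q$, $\delta\subseteq Q\times\Sigma\times Q\times Q$, $\mathbb{C}:Q\to\mathbb{N}$) has computations $\phi:\{l,r\}^*\to Q$ with $\phi(\epsilon)\in Q_I$, $(\phi(v),t(v),\phi(vl),\phi(vr))\in\delta$, accepting if on every branch the largest color seen infinitely often is even. It is finitely ambiguous if on every tree it has finitely many accepting computations. *)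

From mathcomp Require Import all_boot.
From Stdlib Require List.
Set Implicit Arguments. Unset Strict Implicit. Unset Printing Implicit Defensive.

(* Directions: dl = l (false), dr = r (true). Nodes are words in {l,r}^*,
   written left to right from the root: the child vl of v is rcons v dl. *)
Definition dir := bool.
Definition dl : dir := false.
Definition dr : dir := true.
Definition node := seq dir.

Definition tree (Sigma : Type) := node -> Sigma.

Definition tconst (Sigma : Type) (s : Sigma) : tree Sigma := fun _ => s.

Definition graft (Sigma : Type) (t1 : tree Sigma) (v : node) (t2 : tree Sigma)
  : tree Sigma :=
  fun w => if prefix v w then t2 (drop (size v) w) else t1 w.

Record PTA (Sigma : Type) := {
  pta_Q : finType;
  pta_init : pta_Q -> Prop;
  pta_delta : pta_Q -> Sigma -> pta_Q -> pta_Q -> Prop;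
  pta_col : pta_Q -> nat
}.

Definition computation (Sigma : Type) (A : PTA Sigma) (t : tree Sigma)
  (phi : node -> pta_Q A) : Prop :=
  @pta_init _ A (phi [::]) /\
  forall v : node, @pta_delta _ A (phi v) (t v) (phi (rcons v dl)) (phi (rcons v dr)).

Definition branch_node (b : nat -> dir) (n : nat) : node := mkseq b n.

Definition parity_ok (Sigma : Type) (A : PTA Sigma) (phi : node -> pta_Q A)
  (b : nat -> dir) : Prop :=
  exists m : nat, ~~ odd m /\
    (forall N, exists n, N <= n /\ @pta_col _ A (phi (branch_node b n)) = m) /\
    (exists N, forall n, N <= n -> @pta_col _ A (phi (branch_node b n)) <= m).

Definition accepting (Sigma : Type) (A : PTA Sigma) (t : tree Sigma)
  (phi : node -> pta_Q A) : Prop :=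
  @computation _ A t phi /\ forall b : nat -> dir, @parity_ok _ A phi b.

Definition accepts (Sigma : Type) (A : PTA Sigma) (t : tree Sigma) : Prop :=
  exists phi, @accepting _ A t phi.

Definition finitely_ambiguous (Sigma : Type) (A : PTA Sigma) : Prop :=
  forall t : tree Sigma, exists l : seq (node -> pta_Q A),
    forall phi, @accepting _ A t phi -> List.In phi l.

Inductive Sig := a1 | a2 | c.

Definition L_neg (t : tree Sig) : Prop :=
  (forall v, t v <> a1) \/ (forall v, t v <> a2).

Definition L_km (k m : nat) (t : tree Sig) : Prop :=
  exists t' : tree Sig, L_neg t' /\
    forall v, t v = graft (graft (tconst c) (rcons (nseq k dl) dr) t')
                          (nseq m dl) (tconst a1) v.

Definition L_m (m : nat) (t : tree Sig) : Prop := exists k, k < m /\ L_km k m t.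

Definition L_fa (t : tree Sig) : Prop := exists m, L_m m t.

(* Along the leftmost branch l^0, l^1, ... a tree of L^fa is labelled c up to
   l^(m-1) and a1 from l^m on; every side subtree at l^j r is constantly c
   (j < m) or a1 (j >= m), except the one at l^k r, which avoids a1 or a2.
   The automaton walks down the leftmost branch, guesses the branching point k
   and the avoided letter b, and checks all other subtrees deterministically.
   The odd colour of the leftmost-branch states forces every accepting run to
   leave that branch, which is only possible at the first a1. Hence each
   accepting run is a canonical run [canon_run k b m] with k < m, and m is
   determined by the tree: at most 2m accepting runs. *)

From mathcomp Require Import all_boot.
From HB Require Import structures.
From mathcomp Require Import zify.
From Stdlib Require Import Classical FunctionalExtensionality.
Set Implicit Arguments. Unset Strict Implicit. Unset Printing Implicit Defensive.

Lemma upclosed_threshold (P : pred nat) :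
  (forall j, P j -> P j.+1) -> (exists n, P n) -> exists n, forall j, P j = (n <= j).
Proof.
move=> P_up exP; case: (ex_minnP exP) => n Pn n_min; exists n => j.
apply/idP/idP => [/n_min // | le_nj].
by rewrite -(subnKC le_nj); elim: (j - n) => [|i IH]; rewrite ?addn0 ?addnS ?P_up.
Qed.

Lemma rcons_nseq (T : Type) (x : T) j : rcons (nseq j x) x = nseq j.+1 x.
Proof. by elim: j => //= j ->. Qed.

Lemma parity_ok_eventually_zero (Sigma : Type) (A : PTA Sigma)
    (phi : node -> pta_Q A) (br : nat -> dir) :
  (exists N, forall n, N <= n -> pta_col (phi (branch_node br n)) = 0) ->
  parity_ok (A := A) phi br.
Proof.
case=> N col0; exists 0; split=> //; split; last by exists N => n /col0 ->.
by move=> M; exists (maxn M N); rewrite leq_maxl col0 // leq_maxr.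
Qed.

Lemma branch_node_const (d : dir) n : branch_node (fun=> d) n = nseq n d.
Proof.
by elim: n => // n IH; rewrite /branch_node mkseqS -/(branch_node _ n) IH rcons_nseq.
Qed.

Section PrefixNseq.
Variables (T : eqType) (x y : T).
Hypothesis neq_yx : y != x.

Lemma prefix_nseq m j : prefix (nseq m x) (nseq j x) = (m <= j).
Proof. by elim: m j => [|m IH] [|j] //=; rewrite eqxx IH. Qed.

Lemma prefix_nseq_cat m j u : prefix (nseq m x) (nseq j x ++ y :: u) = (m <= j).
Proof.
by elim: m j => [|m IH] [|j] //=; rewrite ?eqxx ?IH // eq_sym (negbTE neq_yx).
Qed.

Lemma prefix_rcons_nseq k j : prefix (rcons (nseq k x) y) (nseq j x) = false.
Proof.
by elim: k j => [|k IH] [|j] //=; rewrite ?eqxx ?IH ?(negbTE neq_yx) ?andbF.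
Qed.

Lemma prefix_rcons_nseq_cat k j u :
  prefix (rcons (nseq k x) y) (nseq j x ++ y :: u) = (j == k).
Proof.
elim: k j => [|k IH] [|j] //=; rewrite ?eqxx ?IH ?prefix0s ?(negbTE neq_yx) //.
by rewrite eq_sym (negbTE neq_yx).
Qed.

End PrefixNseq.

Variant node_spec : node -> Type :=
  | SpineNode j : node_spec (nseq j dl)
  | SideNode j u : node_spec (nseq j dl ++ dr :: u).

Lemma nodeP v : node_spec v.
Proof.
elim: v => [|[] v IHv]; first exact: (SpineNode 0).
  exact: (SideNode 0).
by case: IHv => [j | j u]; [apply: (SpineNode j.+1) | apply: (SideNode j.+1)].
Qed.


Definition tree_km (k m : nat) (t' : tree Sig) : tree Sig :=
  graft (graft (tconst c) (rcons (nseq k dl) dr) t') (nseq m dl) (tconst a1).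

Lemma tree_km_spine k m t' j :
  tree_km k m t' (nseq j dl) = if m <= j then a1 else c.
Proof.
by rewrite /tree_km /graft prefix_nseq prefix_rcons_nseq //; case: ifP.
Qed.

Lemma tree_km_side k m t' j u :
  tree_km k m t' (nseq j dl ++ dr :: u) =
  if m <= j then a1 else if j == k then t' u else c.
Proof.
rewrite /tree_km /graft prefix_nseq_cat ?prefix_rcons_nseq_cat //.
case: ifP => // _; case: eqP => // ->.
by rewrite -cat_rcons drop_size_cat.
Qed.

Lemma eq_tree_km_m k m k' m' t' t'' :
  tree_km k m t' =1 tree_km k' m' t'' -> m = m'.
Proof.
move=> E; apply/eqP; rewrite eqn_leq.
have := E (nseq m dl); have := E (nseq m' dl); rewrite !tree_km_spine !leqnn.
by case: (leqP m m'); case: (leqP m' m).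
Qed.

(* [qPre], [qPost]: on the leftmost branch above / below the guessed branching
   point l^k; [qC], [qA1]: subtree constantly c / a1; [qNoA1], [qNoA2]: subtree
   without a1 / a2. *)
Inductive state := qPre | qPost | qC | qNoA1 | qNoA2 | qA1.

Definition state_to_ord (q : state) : 'I_6 :=
  match q with
  | qPre => @Ordinal 6 0 isT | qPost => @Ordinal 6 1 isT | qC => @Ordinal 6 2 isT
  | qNoA1 => @Ordinal 6 3 isT | qNoA2 => @Ordinal 6 4 isT | qA1 => @Ordinal 6 5 isT
  end.

Definition ord_to_state (i : 'I_6) : option state :=
  nth None [:: Some qPre; Some qPost; Some qC; Some qNoA1; Some qNoA2; Some qA1] i.

Lemma state_to_ordK : pcancel state_to_ord ord_to_state.
Proof. by case. Qed.

HB.instance Definition _ := Finite.copy state (pcan_type state_to_ordK).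

Definition on_spine (q : state) : bool :=
  if q is qPre then true else if q is qPost then true else false.

Definition delta (q : state) (x : Sig) (q1 q2 : state) : Prop :=
  match q with
  | qPre => x = c /\ (q1 = qPre /\ q2 = qC \/ q1 = qPost /\ (q2 = qNoA1 \/ q2 = qNoA2))
  | qPost => x = c /\ q1 = qPost /\ q2 = qC \/ x = a1 /\ q1 = qA1 /\ q2 = qA1
  | qC => x = c /\ q1 = qC /\ q2 = qC
  | qNoA1 => x <> a1 /\ q1 = qNoA1 /\ q2 = qNoA1
  | qNoA2 => x <> a2 /\ q1 = qNoA2 /\ q2 = qNoA2
  | qA1 => x = a1 /\ q1 = qA1 /\ q2 = qA1
  end.

Definition Aut : PTA Sig := {|
  pta_Q := state;
  pta_init := fun q => q = qPre;
  pta_delta := delta;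
  pta_col := fun q => if on_spine q then 1 else 0 |}.

Definition excluded (b : bool) : Sig := if b then a1 else a2.

Definition spine_state (k m j : nat) : state :=
  if j <= k then qPre else if j <= m then qPost else qA1.

Definition side_state (k : nat) (b : bool) (m j : nat) : state :=
  if j == k then (if b then qNoA1 else qNoA2) else if j < m then qC else qA1.

Fixpoint spine_exit (w : node) : nat * bool :=
  if w is d :: w' then
    if d then (0, true) else let (j, off) := spine_exit w' in (j.+1, off)
  else (0, false).

Definition canon_run (k : nat) (b : bool) (m : nat) (w : node) : state :=
  let (j, off) := spine_exit w in
  if off then side_state k b m j else spine_state k m j.

Lemma spine_exit_spine j : spine_exit (nseq j dl) = (j, false).
Proof. by elim: j => //= j ->. Qed.

Lemma spine_exit_side j u : spine_exit (nseq j dl ++ dr :: u) = (j, true).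
Proof. by elim: j => //= j ->. Qed.

Lemma canon_run_spine k b m j :
  canon_run k b m (nseq j dl) = spine_state k m j.
Proof. by rewrite /canon_run spine_exit_spine. Qed.

Lemma canon_run_side k b m j u :
  canon_run k b m (nseq j dl ++ dr :: u) = side_state k b m j.
Proof. by rewrite /canon_run spine_exit_side. Qed.


Lemma delta_spine_state k b m j x : k < m ->
  delta (spine_state k m j) x (spine_state k m j.+1) (side_state k b m j) <->
  x = if m <= j then a1 else c.
Proof.
rewrite /spine_state /side_state => lt_km.
by case: b; repeat case: ifP => ?; try lia; simpl; firstorder congruence.
Qed.

Lemma delta_side_state k b m j x : k < m ->
  delta (side_state k b m j) x (side_state k b m j) (side_state k b m j) <->
  (if m <= j then x = a1 else if j == k then x <> excluded b else x = c).
Proof.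
rewrite /side_state => lt_km.
by case: b; repeat case: ifP => ?; try lia; simpl; firstorder congruence.
Qed.

Lemma delta_spine_right k m j x q : k < m ->
  delta (spine_state k m j) x (spine_state k m j.+1) q ->
  exists b, q = side_state k b m j.
Proof.
rewrite /spine_state /side_state => lt_km.
repeat case: ifP => ?; try lia; simpl.
all: intuition subst; case: eqP => ?; try lia; by [exists true | exists false].
Qed.

Lemma canon_run_computation k b m (t : tree Sig) : k < m ->
  computation (A := Aut) t (canon_run k b m) <->
  exists2 t', (forall u, t' u <> excluded b) & t =1 tree_km k m t'.
Proof.
move=> lt_km; split=> [[_ run_delta] | [t' t'_ok tE]].
  exists (fun u => t (nseq k dl ++ dr :: u)) => [u | v].
    have /= := run_delta (nseq k dl ++ dr :: u).
    by rewrite !rcons_cat !canon_run_side delta_side_state // eqxx leqNgt lt_km.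
  case: (nodeP v) => [j | j u].
    have /= := run_delta (nseq j dl).
    rewrite rcons_nseq -cats1 !canon_run_spine canon_run_side.
    by rewrite delta_spine_state // tree_km_spine.
  have /= := run_delta (nseq j dl ++ dr :: u).
  rewrite !rcons_cat !canon_run_side delta_side_state // tree_km_side.
  by case: ifP => // _; case: eqP => [->|].
split=> [|v]; first by rewrite /= -[[::]]/(nseq 0 dl) canon_run_spine.
case: (nodeP v) => [j | j u] /=.
  rewrite rcons_nseq -cats1 !canon_run_spine canon_run_side.
  by apply/delta_spine_state; rewrite // tE tree_km_spine.
rewrite !rcons_cat !canon_run_side; apply/delta_side_state; rewrite // tE tree_km_side.
by case: leqP => // _; case: eqP => // _; apply: t'_ok.
Qed.


Lemma side_state_off_spine k b m j : ~~ on_spine (side_state k b m j).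
Proof. by rewrite /side_state; do 2 case: ifP. Qed.

Lemma canon_run_off_spine k b m w : k < m -> m < size w ->
  ~~ on_spine (canon_run k b m w).
Proof.
move=> lt_km; case: (nodeP w) => [j | j u]; last first.
  by rewrite canon_run_side side_state_off_spine.
rewrite size_nseq canon_run_spine /spine_state => lt_mj.
by rewrite leqNgt (ltn_trans lt_km lt_mj) leqNgt lt_mj.
Qed.

Lemma canon_run_accepting k b m t : k < m ->
  accepting (A := Aut) t (canon_run k b m) <->
  exists2 t', (forall u, t' u <> excluded b) & t =1 tree_km k m t'.
Proof.
move=> lt_km; rewrite -canon_run_computation //; split=> [[] // | comp].
split=> // br; apply: parity_ok_eventually_zero; exists m.+1 => n lt_mn /=.
by rewrite ifN // canon_run_off_spine // /branch_node size_mkseq.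
Qed.





Lemma delta_left_pre q x q1 q2 : delta q x q1 q2 -> q1 = qPre -> q = qPre.
Proof. by case: q => /=; intuition congruence. Qed.

Section AcceptingRun.
Variables (t : tree Sig) (phi : node -> state).
Hypothesis phi_comp : computation (A := Aut) t phi.

Lemma off_spine_closed v u : ~~ on_spine (phi v) -> phi (v ++ u) = phi v.
Proof.
move=> off; elim/last_ind: u => [|u d IH]; first by rewrite cats0.
have /= := phi_comp.2 (v ++ u); rewrite -rcons_cat IH.
by case: d; case: (phi v) off => //= _ [_ []].
Qed.

Lemma spine_step j : delta (phi (nseq j dl)) (t (nseq j dl))
  (phi (nseq j.+1 dl)) (phi (rcons (nseq j dl) dr)).
Proof. by rewrite -rcons_nseq; apply: phi_comp.2. Qed.

Lemma spine_leave j : on_spine (phi (nseq j dl)) ->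
  ~~ on_spine (phi (nseq j.+1 dl)) ->
  phi (nseq j dl) = qPost /\ phi (nseq j.+1 dl) = qA1.
Proof.
have := spine_step j.
by case: (phi (nseq j dl)) => //= [[_ [[-> _]|[-> _]]] | [[_ [-> _]]|[_ [-> _]]]].
Qed.

Lemma spine_shape : (exists n, ~~ on_spine (phi (nseq n dl))) ->
  exists k m, k < m /\ forall j, phi (nseq j dl) = spine_state k m j.
Proof.
move=> leaves.
have off_up j : ~~ on_spine (phi (nseq j dl)) -> ~~ on_spine (phi (nseq j.+1 dl)).
  by move=> off; rewrite -rcons_nseq -cats1 off_spine_closed.
have pre_up j : phi (nseq j dl) != qPre -> phi (nseq j.+1 dl) != qPre.
  by apply: contra => /eqP/(delta_left_pre (spine_step j))/eqP.
have root : phi (nseq 0 dl) = qPre := phi_comp.1.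
have [M offE] := upclosed_threshold off_up leaves.
have [K preE] : exists K, forall j, (phi (nseq j dl) != qPre) = (K <= j).
  apply: upclosed_threshold pre_up _; exists M.
  by move: (offE M); rewrite leqnn; case: (phi (nseq M dl)).
case: M offE => [|m] offE; first by have := offE 0; rewrite root.
have [post_m A1_m] : phi (nseq m dl) = qPost /\ phi (nseq m.+1 dl) = qA1.
  by apply: spine_leave; rewrite ?offE // -[on_spine _]negbK offE ltnn.
case: K preE => [|k] preE; first by have := preE 0; rewrite root eqxx.
have lt_km : k < m by rewrite -preE post_m.
exists k, m; split=> // j; rewrite /spine_state.
case: leqP => [le_jk | lt_kj].
  by apply/eqP/negPn; rewrite preE -leqNgt.
case: leqP => [le_jm | lt_mj].
  by move: (offE j) (preE j); rewrite lt_kj ltnNge le_jm; case: (phi (nseq j dl)).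
by rewrite -(subnKC lt_mj) nseqD off_spine_closed A1_m.
Qed.

Lemma side_shape k m : k < m ->
  (forall j, phi (nseq j dl) = spine_state k m j) ->
  exists b, forall j, phi (rcons (nseq j dl) dr) = side_state k b m j.
Proof.
move=> lt_km spineE.
have side j : exists b, phi (rcons (nseq j dl) dr) = side_state k b m j.
  by apply: (delta_spine_right lt_km); rewrite -!spineE; apply: spine_step.
have [b sideE] := side k; exists b => j.
case: (eqVneq j k) => [-> // | ne_jk].
by have [b' ->] := side j; rewrite /side_state (negbTE ne_jk).
Qed.
End AcceptingRun.

Lemma leaves_spine (phi : node -> state) :
  parity_ok (A := Aut) phi (fun=> dl) -> exists n, ~~ on_spine (phi (nseq n dl)).
Proof.
case=> col [col_even [col_inf _]]; have [n [_ col_n]] := col_inf 0; exists n.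
by move: col_n col_even; rewrite /= branch_node_const; case: on_spine => // <-.
Qed.

Lemma accepting_canonical t phi : accepting (A := Aut) t phi ->
  exists k b m, k < m /\ phi = canon_run k b m.
Proof.
case=> comp /(_ (fun=> dl))/leaves_spine leaves.
have [k [m [lt_km spineE]]] := spine_shape comp leaves.
have [b sideE] := side_shape comp lt_km spineE.
exists k, b, m; split=> //; apply: functional_extensionality => v.
case: (nodeP v) => [j | j u]; first by rewrite spineE canon_run_spine.
rewrite canon_run_side -cat_rcons (off_spine_closed comp) // sideE //.
exact: side_state_off_spine.
Qed.

Lemma accepting_canon_run_eq_m t k b m k' b' m' : k < m -> k' < m' ->
  accepting (A := Aut) t (canon_run k b m) ->
  accepting (A := Aut) t (canon_run k' b' m') -> m = m'.
Proof.
move=> lt_km lt_km'; rewrite !canon_run_accepting // => -[t1 _ E1] [t2 _ E2].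
by apply: (@eq_tree_km_m k _ k' _ t1 t2) => v; rewrite -E1 -E2.
Qed.

Definition canon_runs (m : nat) : list (node -> state) :=
  List.map (fun kb => canon_run kb.1 kb.2 m)
    (List.list_prod (List.seq 0 m) [:: true; false]).

Lemma in_canon_runs k b m : k < m -> List.In (canon_run k b m) (canon_runs m).
Proof.
move=> lt_km; apply: (List.in_map (fun kb => canon_run kb.1 kb.2 m) _ (k, b)).
apply: List.in_prod; first by apply/List.in_seq; lia.
by case: b; [left | right; left].
Qed.

Lemma L_negP t' : L_neg t' <-> exists b, forall u, t' u <> excluded b.
Proof.
by split=> [[] t'_ok | [[] t'_ok]]; [exists true | exists false | left | right].
Qed.

Theorem lemma6p3 :
  exists A : PTA Sig,
    finitely_ambiguous A /\ (forall t : tree Sig, accepts A t <-> L_fa t).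
Proof.
exists Aut; split=> t.
  have [[phi0 acc0] | no_run] := classic (exists phi, accepting (A := Aut) t phi);
    last by exists [::] => phi acc; case: no_run; exists phi.
  have [k0 [b0 [m [lt_k0m phi0E]]]] := accepting_canonical acc0.
  exists (canon_runs m) => phi.
  move=> /[dup] acc /accepting_canonical [k [b [m' [lt_km' phiE]]]].
  rewrite phiE in acc *; rewrite phi0E in acc0.
  by rewrite -(accepting_canon_run_eq_m lt_km' lt_k0m acc acc0); apply: in_canon_runs.
split=> [[phi /[dup] acc /accepting_canonical [k [b [m [lt_km phiE]]]]] |].
  move: acc; rewrite phiE canon_run_accepting // => -[t' t'_ok tE].
  by exists m, k; split=> //; exists t'; split=> //; apply/L_negP; exists b.
case=> m [k [lt_km [t' [/L_negP [b t'_ok] tE]]]].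
by exists (canon_run k b m); apply/canon_run_accepting => //; exists t'.
Qed.
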